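(* For any qubit state $\rho$ (density matrix on $\mathbb{C}^2$), $$F_c(\rho)=\frac{1}{2}+\frac{1}{2}\,C_{\mathcal{R}}(\rho).$$
   Context: Coherence is taken with respect to the computational basis $\{|0\rangle,|1\rangle\}$; incoherent states are those diagonal in this basis, forming the set $\mathcal{I}$. The set of maximally coherent qubit states is $\mathcal{M}=\{\frac{1}{\sqrt2}(e^{\mathfrak{i}\theta_0}|0\rangle+e^{\mathfrak{i}\theta_1}|1\rangle):\theta_0,\theta_1\in[0,2\pi]\}$, and the coherence fraction is $F_c(\rho)=\max_{|\phi\rangle\in\mathcal{M}}\langle\phi|\rho|\phi\rangle$. The robustness of coherence is $C_{\mathcal{R}}(\rho)=\min_{\tau}\{s\ge 0: \frac{\rho+s\tau}{1+s}\in\mathcal{I}\}$, where the minimum is over all states $\tau$. *)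

From HB Require Import structures.
From mathcomp Require Import all_boot all_order all_algebra.
From mathcomp Require Import all_classical all_reals.
From mathcomp Require Import trigo.
From mathcomp Require Import complex.

Set Implicit Arguments.
Unset Strict Implicit.
Unset Printing Implicit Defensive.

Import Order.TTheory GRing.Theory Num.Theory.
Local Open Scope ring_scope.
Local Open Scope complex_scope.
Local Open Scope classical_set_scope.

Section Qubit.
Variable R : realType.
Local Notation C := R[i].

Definition adjmx m n (A : 'M[C]_(m, n)) : 'M[C]_(n, m) := map_mx conjc A^T.

(* Density matrix (qubit state): Hermitian, positive semidefinite, trace 1.
   The order on R[i] is the numeric-field order: 0 <= z iff z is real
   and nonnegative. *)
Definition is_state (rho : 'M[C]_2) : Prop :=
  adjmx rho = rho /\
  (forall v : 'cV[C]_2, 0 <= (adjmx v *m rho *m v) 0 0) /\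
  \tr rho = 1.

Definition incoherent (rho : 'M[C]_2) : Prop :=
  is_state rho /\ is_diag_mx rho.

Definition expi (t : R) : C := (cos t) +i* (sin t).

Definition maxcoh (t0 t1 : R) : 'cV[C]_2 :=
  \matrix_(k, j) (((Num.sqrt 2)^-1)%:C * (if val k == 0%N then expi t0 else expi t1)).

Definition braket (rho : 'M[C]_2) (phi : 'cV[C]_2) : C :=
  (adjmx phi *m rho *m phi) 0 0.

(* Coherence fraction: max over M of <phi|rho|phi> (a real number for
   Hermitian rho; we take its real part). *)
Definition coh_fraction (rho : 'M[C]_2) : R :=
  sup [set r : R | exists t0 t1 : R,
        [/\ (0 <= t0 <= 2 * pi)%R, (0 <= t1 <= 2 * pi)%R &
            r = complex.Re (braket rho (maxcoh t0 t1))]].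

Definition robustness (rho : 'M[C]_2) : R :=
  inf [set s : R | (0 <= s)%R /\ exists tau : 'M[C]_2,
        is_state tau /\ incoherent ((1 + s%:C)^-1 *: (rho + s%:C *: tau))].

End Qubit.

(* A Hermitian unit-trace qubit matrix is [[a, c], [c^*, 1 - a]], and it is
   positive semidefinite iff 0 <= a <= 1 and |c|^2 <= a (1 - a) <= 1/4.
   Its overlap with (e^{i t0}|0> + e^{i t1}|1>)/sqrt 2 is
   1/2 + Re (c e^{i (t1 - t0)}), whose maximum over the phases is 1/2 + |c|.
   A mixture (rho + s tau)/(1 + s) is diagonal iff c = - s tau_01, and
   |tau_01| <= 1/2 forces s >= 2|c|; the state tau with diagonal 1/2 and
   off-diagonal entry - c/(2|c|) attains s = 2|c|.  Hence F_c = 1/2 + |c| and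
   C_R = 2|c|. *)

From mathcomp Require Import all_boot all_order all_algebra.
From mathcomp Require Import all_classical all_reals.
From mathcomp Require Import trigo.
From mathcomp Require Import complex.
From mathcomp Require Import ring lra.

Set Implicit Arguments.
Unset Strict Implicit.
Unset Printing Implicit Defensive.

Import Order.TTheory GRing.Theory Num.Theory.
Local Open Scope ring_scope.
Local Open Scope complex_scope.

Lemma cauchy_schwarz2 (R : realDomainType) (p q u v : R) :
  (p * u + q * v) ^+ 2 <= (p ^+ 2 + q ^+ 2) * (u ^+ 2 + v ^+ 2).
Proof.
have -> : (p ^+ 2 + q ^+ 2) * (u ^+ 2 + v ^+ 2) =
          (p * u + q * v) ^+ 2 + (p * v - q * u) ^+ 2 by ring.
by rewrite lerDl sqr_ge0.
Qed.

Section Hypot.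
Variable R : rcfType.
Implicit Types p q u v : R.

Definition hypot p q : R := Num.sqrt (p ^+ 2 + q ^+ 2).

Lemma hypot_ge0 p q : 0 <= hypot p q.
Proof. exact: sqrtr_ge0. Qed.

Lemma sqr_hypot p q : hypot p q ^+ 2 = p ^+ 2 + q ^+ 2.
Proof. by rewrite sqr_sqrtr // addr_ge0 ?sqr_ge0. Qed.

Lemma hypot_eq0 p q : hypot p q = 0 -> p = 0 /\ q = 0.
Proof. by move=> h0; have := sqr_hypot p q; rewrite h0 expr0n /=; split; nra. Qed.

Lemma ler_dot_hypot p q u v : u ^+ 2 + v ^+ 2 = 1 -> p * u + q * v <= hypot p q.
Proof.
move=> uv; have := cauchy_schwarz2 p q u v; rewrite uv mulr1 => cs.
by rewrite (le_trans (ler_norm _)) // -sqrtr_sqr ler_sqrt // addr_ge0 ?sqr_ge0.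
Qed.

End Hypot.

Section RealFacts.
Variable R : realType.

Lemma unit_circle_angle (x y : R) : x ^+ 2 + y ^+ 2 = 1 ->
  exists t : R, [/\ 0 <= t <= 2 * pi, cos t = x & sin t = y].
Proof.
move=> xy.
have x11 : -1 <= x <= 1 by apply/andP; split; nra.
have cos_acos : cos (acos x) = x by apply: acosK; rewrite in_itv.
have sin_acos : sin (acos x) = `|y|.
  by rewrite sin_acos // (_ : 1 - x ^+ 2 = y ^+ 2) ?sqrtr_sqr //; lra.
have acos0 := acos_ge0 x11; have acos_pi := acos_lepi x11; have pi0 := pi_ge0 R.
have [y0|y0] := lerP 0 y.
  exists (acos x); split => //; last by rewrite sin_acos ger0_norm.
  by rewrite acos0 /=; lra.
exists (2 * pi - acos x); split.
- by apply/andP; split; lra.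
- by rewrite cosB mulr_natl cos2pi sin2pi cos_acos; ring.
- by rewrite sinB mulr_natl cos2pi sin2pi sin_acos ltr0_norm //; ring.
Qed.

Lemma hypot_attained (p q : R) :
  exists t : R, 0 <= t <= 2 * pi /\ p * cos t - q * sin t = hypot p q.
Proof.
have [h0|h_neq0] := eqVneq (hypot p q) 0.
  exists 0; rewrite h0 lexx mulr_ge0 ?pi_ge0 //; split => //.
  by have [-> ->] := hypot_eq0 h0; ring.
have [t [t02 ct st]] : exists t : R,
    [/\ 0 <= t <= 2 * pi, cos t = p / hypot p q & sin t = - q / hypot p q].
  apply: unit_circle_angle.
  by rewrite !expr_div_n sqrrN -mulrDl -sqr_hypot divff // expf_neq0.
exists t; split => //; rewrite ct st.
have -> : p * (p / hypot p q) - q * (- q / hypot p q) = hypot p q ^+ 2 / hypot p q.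
  by rewrite sqr_hypot; field.
by rewrite expr2 mulfK.
Qed.

Lemma sup_maximum (E : set R) x : E x -> ubound E x -> sup E = x.
Proof.
move=> Ex ubx; apply/le_anti/andP; split; first by apply: ge_sup => //; exists x.
by apply: ub_le_sup => //; exists x.
Qed.

Lemma inf_minimum (E : set R) x : E x -> lbound E x -> inf E = x.
Proof.
move=> Ex lbx; apply/le_anti/andP; split; last by apply: lb_le_inf => //; exists x.
by apply: ge_inf => //; exists x.
Qed.

End RealFacts.

Lemma ord2P (P : 'I_2 -> Prop) : P 0 -> P 1 -> forall i, P i.
Proof.
move=> P0 P1 [[|[|//]] lti];
  [suff -> : Ordinal lti = 0 by [] | suff -> : Ordinal lti = 1 by []]; exact: val_inj.
Qed.

Lemma sum_ord2 (V : nmodType) (F : 'I_2 -> V) : \sum_(i < 2) F i = F 0 + F 1.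
Proof. by rewrite big_ord_recl big_ord1; congr (_ + F _); exact: val_inj. Qed.

Section QubitMatrices.
Variable R : realType.
Local Notation C := R[i].
Local Notation Re := (@complex.Re R).
Local Notation Im := (@complex.Im R).

Definition qmx (a d p q : R) : 'M[C]_2 :=
  \matrix_(i, j) if val i == val j then (if val i == 0%N then a%:C else d%:C)
                 else if val i == 0%N then p +i* q else p -i* q.

Lemma braket2 (M : 'M[C]_2) (v : 'cV[C]_2) : braket M v =
  (v 0 0)^* * (M 0 0 * v 0 0 + M 0 1 * v 1 0) +
  (v 1 0)^* * (M 1 0 * v 0 0 + M 1 1 * v 1 0).
Proof. by rewrite /braket /adjmx !mxE !sum_ord2 !mxE !sum_ord2 !mxE; ring. Qed.

Lemma braket_qmx a d p q (v : 'cV[C]_2) : braket (qmx a d p q) v =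
  let: x1 +i* x2 := v 0 0 in let: y1 +i* y2 := v 1 0 in
  (a * (x1 ^+ 2 + x2 ^+ 2) + d * (y1 ^+ 2 + y2 ^+ 2)
   + 2 * (p * (x1 * y1 + x2 * y2) - q * (x1 * y2 - x2 * y1)))%:C.
Proof.
rewrite braket2 !mxE /=; case: (v 0 0) => x1 x2; case: (v 1 0) => y1 y2; simpc.
by apply/eqP; rewrite eq_complex /=; apply/andP; split; apply/eqP; ring.
Qed.

Lemma hermitian_qmx (M : 'M[C]_2) : adjmx M = M ->
  M = qmx (Re (M 0 0)) (Re (M 1 1)) (Re (M 0 1)) (Im (M 0 1)).
Proof.
move=> hM; have hJ i j : (M j i)^* = M i j by rewrite -{2}hM !mxE.
have real_diag i : M i i = (Re (M i i))%:C.
  by move: (hJ i i); case: (M i i) => x y [] hy; have -> : y = 0 by lra.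
apply/matrixP => i j; elim/ord2P: i; elim/ord2P: j; rewrite mxE //=.
- by case: (M 0 1).
- by rewrite -hJ; case: (M 0 1).
Qed.

Lemma braket_qmx_ge0 a d p q (v : 'cV[C]_2) :
  0 <= a -> 0 <= d -> p ^+ 2 + q ^+ 2 <= a * d -> 0 <= braket (qmx a d p q) v.
Proof.
move=> a0 d0 det; rewrite braket_qmx.
case: (v 0 0) => x1 x2; case: (v 1 0) => y1 y2; rewrite lecR.
set X := x1 ^+ 2 + x2 ^+ 2; set Y := y1 ^+ 2 + y2 ^+ 2.
have X0 : 0 <= X by rewrite addr_ge0 ?sqr_ge0.
have Y0 : 0 <= Y by rewrite addr_ge0 ?sqr_ge0.
have := cauchy_schwarz2 p (- q) (x1 * y1 + x2 * y2) (x1 * y2 - x2 * y1).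
have -> : (x1 * y1 + x2 * y2) ^+ 2 + (x1 * y2 - x2 * y1) ^+ 2 = X * Y by rewrite /X /Y; ring.
rewrite sqrrN; set z := _ * _ + _ * _ => cs.
have amgm : 4 * (a * X) * (d * Y) <= (a * X + d * Y) ^+ 2.
  by rewrite -subr_ge0 (_ : _ - _ = (a * X - d * Y) ^+ 2) ?sqr_ge0 //; ring.
have detXY : (p ^+ 2 + q ^+ 2) * (X * Y) <= a * d * (X * Y).
  by rewrite ler_wpM2r ?mulr_ge0.
have sq : (2 * z) ^+ 2 <= (a * X + d * Y) ^+ 2 by nra.
have S0 : 0 <= a * X + d * Y by rewrite addr_ge0 ?mulr_ge0.
have : - (2 * z) <= a * X + d * Y by nra.
by rewrite /z; lra.
Qed.

Lemma is_state_qmx a d p q : is_state (qmx a d p q) <->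
  [/\ a + d = 1, 0 <= a, 0 <= d & p ^+ 2 + q ^+ 2 <= a * d].
Proof.
split.
- move=> [_ [psd tr]].
  have {}psd x1 x2 y1 y2 : 0 <= a * (x1 ^+ 2 + x2 ^+ 2) + d * (y1 ^+ 2 + y2 ^+ 2)
      + 2 * (p * (x1 * y1 + x2 * y2) - q * (x1 * y2 - x2 * y1)).
    have := psd (\col_i [:: x1 +i* x2; y1 +i* y2]`_i).
    by rewrite -/(braket _ _) braket_qmx !mxE /= lecR.
  have trace : a + d = 1 by move: tr; rewrite /mxtrace sum_ord2 !mxE /= => -[].
  have a0 := psd 1 0 0 0; have d0 := psd 0 0 1 0.
  (* at (-c, a) and (d, -conj c) the form is a (ad - |c|^2) and d (ad - |c|^2) *)
  have := psd (- p) (- q) a 0; have := psd d 0 (- p) q.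
  by split => //; nra.
- move=> [trace a0 d0 det]; split; [|split].
  + by apply/matrixP => i j; elim/ord2P: i; elim/ord2P: j; rewrite !mxE /= ?oppr0 ?opprK.
  + by move=> v; apply: braket_qmx_ge0.
  + by rewrite /mxtrace sum_ord2 !mxE /= -rmorphD trace.
Qed.

Lemma state_offdiag_le a d p q : is_state (qmx a d p q) -> p ^+ 2 + q ^+ 2 <= 4^-1.
Proof.
case/is_state_qmx => tr _ _ det.
have : 0 <= (a - d) ^+ 2 by apply: sqr_ge0.
by nra.
Qed.

Lemma is_diag_qmx a d p q : is_diag_mx (qmx a d p q) <-> p = 0 /\ q = 0.
Proof.
split; first by move=> /is_diag_mxP /(_ 0 1 isT); rewrite mxE /= => -[].
move=> [-> ->]; apply/is_diag_mxP => i j.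
by elim/ord2P: i; elim/ord2P: j => // _; rewrite mxE /= ?oppr0.
Qed.

Lemma incoherent_qmx a d : a + d = 1 -> 0 <= a -> 0 <= d -> incoherent (qmx a d 0 0).
Proof.
move=> tr a0 d0; split; last exact/is_diag_qmx.
by apply/is_state_qmx; split => //; rewrite expr0n /= addr0 mulr_ge0.
Qed.

Lemma qmxD a d p q a' d' p' q' :
  qmx a d p q + qmx a' d' p' q' = qmx (a + a') (d + d') (p + p') (q + q').
Proof.
apply/matrixP => i j; elim/ord2P: i; elim/ord2P: j; rewrite !mxE /= ?rmorphD //.
by rewrite opprD.
Qed.

Lemma scale_qmx k a d p q : k%:C *: qmx a d p q = qmx (k * a) (k * d) (k * p) (k * q).
Proof.
apply/matrixP => i j; elim/ord2P: i; elim/ord2P: j.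
all: by rewrite !mxE /= ?rmorphM //; simpc; rewrite ?mulrN.
Qed.

Lemma mixture_qmx s a d p q a' d' p' q' :
  (1 + s%:C)^-1 *: (qmx a d p q + s%:C *: qmx a' d' p' q') =
  qmx ((a + s * a') / (1 + s)) ((d + s * d') / (1 + s))
      ((p + s * p') / (1 + s)) ((q + s * q') / (1 + s)).
Proof.
rewrite -[1]/(1%:C) -rmorphD -fmorphV scale_qmx qmxD scale_qmx.
by congr qmx; rewrite mulrC.
Qed.

Lemma Re_braket_maxcoh a d p q t0 t1 : Re (braket (qmx a d p q) (maxcoh t0 t1)) =
  (a + d) / 2 + (p * cos (t1 - t0) - q * sin (t1 - t0)).
Proof.
rewrite braket_qmx !mxE /= /expi /=.
set k := (Num.sqrt 2)^-1.
have k2 : k ^+ 2 = 2^-1 by rewrite exprVn sqr_sqrtr.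
transitivity (k ^+ 2 * (a * (cos t0 ^+ 2 + sin t0 ^+ 2) + d * (cos t1 ^+ 2 + sin t1 ^+ 2)
                        + 2 * (p * cos (t1 - t0) - q * sin (t1 - t0)))).
  by rewrite cosB sinB; ring.
by rewrite k2 !cos2Dsin2; field.
Qed.

Lemma coh_fraction_qmx a d p q : a + d = 1 ->
  coh_fraction (qmx a d p q) = 2^-1 + hypot p q.
Proof.
move=> tr; apply: sup_maximum.
- have [t [t02 ht]] := hypot_attained p q.
  exists 0, t; split => //; first by rewrite lexx mulr_ge0 ?pi_ge0.
  by rewrite Re_braket_maxcoh subr0 ht tr div1r.
- move=> _ [t0 [t1 [_ _ ->]]]; rewrite Re_braket_maxcoh tr div1r lerD2l.
  have := @ler_dot_hypot _ p q (cos (t1 - t0)) (- sin (t1 - t0)).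
  by rewrite sqrrN cos2Dsin2 mulrN => /(_ erefl).
Qed.

Lemma robustness_witness a d p q : is_state (qmx a d p q) ->
  exists tau, is_state tau /\
    incoherent ((1 + (2 * hypot p q)%:C)^-1 *: (qmx a d p q + (2 * hypot p q)%:C *: tau)).
Proof.
case/is_state_qmx => tr a0 d0 _; set n := hypot p q.
have n0 : 0 <= n := hypot_ge0 p q.
have [n_eq0|n_neq0] := eqVneq n 0.
  have [p0 q0] := hypot_eq0 n_eq0.
  exists (qmx 1 0 0 0); split; first by apply/is_state_qmx; rewrite expr0n /= addr0 mulr0 addr0.
  rewrite mixture_qmx n_eq0 p0 q0 !(mulr0, mul0r, addr0, divr1).
  exact: incoherent_qmx.
exists (qmx 2^-1 2^-1 (- p / (2 * n)) (- q / (2 * n))); split.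
- apply/is_state_qmx; split; rewrite ?invr_ge0 //; first by field.
  rewrite !expr_div_n !sqrrN -mulrDl -sqr_hypot -/n.
  by rewrite le_eqVlt; apply/orP; left; apply/eqP; field.
- rewrite mixture_qmx.
  have -> : p + 2 * n * (- p / (2 * n)) = 0 by field.
  have -> : q + 2 * n * (- q / (2 * n)) = 0 by field.
  rewrite !mul0r; apply: incoherent_qmx.
  + by rewrite -mulrDl (_ : _ + _ = 1 + 2 * n) ?divff //; lra.
  + by apply: divr_ge0; lra.
  + by apply: divr_ge0; lra.
Qed.

Lemma robustness_lower_bound a d p q s tau : 0 <= s -> is_state tau ->
  incoherent ((1 + s%:C)^-1 *: (qmx a d p q + s%:C *: tau)) -> 2 * hypot p q <= s.
Proof.
move=> s0 st_tau [_ diag]; set n := hypot p q.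
have htau := hermitian_qmx st_tau.1; rewrite {}htau in st_tau diag.
have quarter := state_offdiag_le st_tau.
move: diag quarter; rewrite mixture_qmx => /is_diag_qmx [].
set p' := Re _; set q' := Im _.
have s1 : 1 + s != 0 by rewrite gt_eqF // ltr_pwDl.
have divK0 x : x / (1 + s) = 0 -> x = 0.
  by move/eqP; rewrite mulf_eq0 invr_eq0 (negbTE s1) orbF => /eqP.
move=> /divK0 hp /divK0 hq quarter.
have ns : n ^+ 2 <= (s / 2) ^+ 2.
  have -> : n ^+ 2 = s ^+ 2 * (p' ^+ 2 + q' ^+ 2).
    have {}hp : p = - (s * p') by lra.
    have {}hq : q = - (s * q') by lra.
    by rewrite sqr_hypot hp hq; ring.
  have -> : (s / 2) ^+ 2 = s ^+ 2 * 4^-1 by field.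
  by rewrite ler_wpM2l ?sqr_ge0.
have : n <= s / 2 by rewrite -ler_sqr ?nnegrE ?divr_ge0 ?hypot_ge0.
by lra.
Qed.

Lemma robustness_qmx a d p q : is_state (qmx a d p q) ->
  robustness (qmx a d p q) = 2 * hypot p q.
Proof.
move=> st; apply: inf_minimum.
- by split; [rewrite mulr_ge0 ?hypot_ge0 | exact: robustness_witness].
- by move=> s [s0 [tau [st_tau inc]]]; exact: robustness_lower_bound inc.
Qed.

End QubitMatrices.

Theorem mainTheorem2 (R : realType) (rho : 'M[R[i]]_2) :
  is_state rho ->
  coh_fraction rho = 2^-1 + 2^-1 * robustness rho.
Proof.
move=> st; have rho_qmx := hermitian_qmx st.1; rewrite {}rho_qmx in st *.
case/is_state_qmx: (st) => tr _ _ _.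
by rewrite coh_fraction_qmx // robustness_qmx // mulKf // pnatr_eq0.
Qed.
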